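(* There are universal constants $C,C'$ such that for all $A<n$ (with $n$ an integer) and all $\Lambda$ with $A\pm\Lambda$ integers, $|\Lambda|\le A-1$, \[ \Pr\bigl[BINGO(A+\Lambda,A-\Lambda;n,n)\bigr]\le\frac{C}{\sqrt{n-A}}e^{-\Lambda^2/(n-A)}, \] and, if moreover $\Lambda\neq0$, this is at most $\frac{C'}{|\Lambda|}e^{-\Lambda^2/(2(n-A))}$.
   Context: Fix $\alpha>1$. Consider the Markov chain on $\mathbb N\times\mathbb N$ which from state $(i,j)$ moves to $(i+1,j)$ with probability $i^\alpha/(i^\alpha+j^\alpha)$ and to $(i,j+1)$ with probability $j^\alpha/(i^\alpha+j^\alpha)$. For states $(a,b)$, $(c,d)$, $BINGO(a,b;c,d)$ denotes the event that this chain, started at state $(a,b)$, visits the state $(c,d)$. *)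

From Stdlib Require Import Reals Arith.
Open Scope R_scope.

(* i^alpha for natural i (with 0^alpha = 0, as alpha > 0). *)
Definition npow (alpha : R) (i : nat) : R :=
  match i with O => 0 | _ => Rpower (INR i) alpha end.

Definition pstepR (alpha : R) (i j : nat) : R :=
  npow alpha i / (npow alpha i + npow alpha j).
Definition pstepU (alpha : R) (i j : nat) : R :=
  npow alpha j / (npow alpha i + npow alpha j).

Fixpoint at_after (alpha : R) (k a b c d : nat) : R :=
  match k with
  | O => if andb (Nat.eqb a c) (Nat.eqb b d) then 1 else 0
  | S k' => pstepR alpha a b * at_after alpha k' (S a) b c d
            + pstepU alpha a b * at_after alpha k' a (S b) c d
  end.

(* Pr[BINGO(a,b;c,d)]: since each step increases i+j by exactly one, the chain
   visits (c,d) iff it is at (c,d) at time (c+d)-(a+b). *)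
Definition bingo (alpha : R) (a b c d : nat) : R :=
  if Nat.leb (a + b) (c + d) then at_after alpha (c + d - (a + b)) a b c d else 0.

(* From (i,j) the chain steps towards its larger coordinate with probability at
   least 1/2, since i^alpha is increasing in i.  By induction on the number
   K = 2n - a - b of remaining steps, the probability of hitting (n,n) from
   (a,b) is therefore at most the symmetric-walk probability C(K, n-a) / 2^K:
   each step averages two neighbouring binomial coefficients, and the chain gives
   the larger weight to the smaller one.  The local limit estimate
   C(K,i) / 2^K <= e / sqrt K * exp (-(K-2i)^2 / (2K)) follows from the central
   bound C(K, K/2) / 2^K <= 1 / sqrt (K+1) and from the ratio bound
   (i+1) / (K-i) <= exp (-2(K-2i-1) / (K+1)), an instance of
   ln (u/v) >= 2(u-v) / (u+v).  With K = 2(n-A) and K - 2(n-a) = 2L this is the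
   first bound; the second follows from |L| exp (-L^2 / (2s)) <= sqrt s. *)

From Stdlib Require Import Reals Lra Lia.
From Coquelicot Require Import Rcomplements Hierarchy Derive AutoDerive.
Open Scope R_scope.

Lemma exp_mul_exp_opp x : exp x * exp (- x) = 1.
Proof. rewrite <- exp_plus, Rplus_opp_r; apply exp_0. Qed.

Lemma one_sub_mul_exp_le x : 0 <= x -> (1 - x) * exp (2 * x) <= 1 + x.
Proof.
  intros Hx; destruct (Req_dec x 0) as [->|Hx0].
  { rewrite Rmult_0_r, exp_0; lra. }
  set (f y := (1 + y) - (1 - y) * exp (2 * y)).
  set (f' y := 1 - exp (2 * y) * (1 - 2 * y)).
  destruct (MVT_cor2 f f' 0 x) as [c [Hfc Hc]]; [lra| |].
  { intros c _; apply is_derive_Reals; unfold f, f'; auto_derive; [auto|ring]. }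
  assert (Hf'c : 0 <= f' c).
  { pose proof (exp_ineq1_le (- (2 * c))); pose proof (exp_mul_exp_opp (2 * c)).
    pose proof (exp_pos (2 * c)); unfold f'; nra. }
  assert (f 0 = 0) by (unfold f; rewrite Rmult_0_r, exp_0; ring).
  unfold f in *; nra.
Qed.

Lemma ratio_le_exp u v : 0 < v -> v <= u -> v / u <= exp (- (2 * (u - v) / (u + v))).
Proof.
  intros Hv Hvu.
  set (x := (u - v) / (u + v)).
  assert (Hx : 0 <= x) by (apply Rdiv_le_0_compat; lra).
  pose proof (one_sub_mul_exp_le x Hx) as Hle.
  replace (1 - x) with (2 * v / (u + v)) in Hle by (unfold x; field; lra).
  replace (1 + x) with (2 * u / (u + v)) in Hle by (unfold x; field; lra).
  replace (- (2 * (u - v) / (u + v))) with (- (2 * x)) by (unfold x; field; lra).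
  assert (Hvu' : v * exp (2 * x) <= u).
  { apply Rmult_le_reg_l with (2 / (u + v)); [apply Rdiv_lt_0_compat; lra|].
    replace (2 / (u + v) * (v * exp (2 * x))) with (2 * v / (u + v) * exp (2 * x)) by (field; lra).
    replace (2 / (u + v) * u) with (2 * u / (u + v)) by (field; lra).
    exact Hle. }
  pose proof (exp_mul_exp_opp (2 * x)); pose proof (exp_pos (2 * x)).
  apply Rmult_le_reg_r with (u * exp (2 * x)); [nra|].
  replace (v / u * (u * exp (2 * x))) with (v * exp (2 * x)) by (field; lra).
  replace (exp (- (2 * x)) * (u * exp (2 * x))) with u by nra.
  exact Hvu'.
Qed.

Lemma Rabs_mul_exp_le_sqrt s L : 0 < s -> Rabs L * exp (- (L ^ 2) / (2 * s)) <= sqrt s.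
Proof.
  intros Hs.
  set (y := L ^ 2 / (2 * s)).
  assert (Hy : 0 <= y) by (apply Rdiv_le_0_compat; [apply pow2_ge_0|lra]).
  replace (- (L ^ 2) / (2 * s)) with (- y) by (unfold y; field; lra).
  pose proof (exp_pos (- y)); pose proof (Rabs_pos L).
  rewrite <- (sqrt_pow2 (Rabs L * exp (- y))) by nra.
  apply sqrt_le_1; [nra|lra|].
  replace ((Rabs L * exp (- y)) ^ 2) with (2 * y * exp (- y) ^ 2 * s)
    by (rewrite Rpow_mult_distr, pow2_abs; unfold y; field; lra).
  pose proof (exp_ineq1_le (2 * y)).
  replace (exp (- y) ^ 2) with (exp (- (2 * y))) by (simpl; rewrite Rmult_1_r, <- exp_plus; f_equal; ring).
  pose proof (exp_mul_exp_opp (2 * y)); pose proof (exp_pos (- (2 * y))).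
  assert (2 * y * exp (- (2 * y)) <= 1) by nra.
  nra.
Qed.

Lemma gaussian_le_inv_abs c s L : 0 <= c -> 0 < s -> L <> 0 ->
  c / sqrt s * exp (- (L ^ 2) / s) <= c / Rabs L * exp (- (L ^ 2) / (2 * s)).
Proof.
  intros Hc Hs HL.
  set (e := exp (- (L ^ 2) / (2 * s))).
  replace (exp (- (L ^ 2) / s)) with (e * e) by (unfold e; rewrite <- exp_plus; f_equal; field; lra).
  assert (He : 0 < e) by apply exp_pos.
  pose proof (Rabs_mul_exp_le_sqrt s L Hs) as Hle; fold e in Hle.
  pose proof (Rabs_pos_lt L HL); pose proof (sqrt_lt_R0 s Hs).
  replace (c / sqrt s * (e * e)) with (c * e / (Rabs L * sqrt s) * (Rabs L * e)) by (field; lra).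
  replace (c / Rabs L * e) with (c * e / (Rabs L * sqrt s) * sqrt s) by (field; lra).
  apply Rmult_le_compat_l; [apply Rdiv_le_0_compat; nra|exact Hle].
Qed.

Lemma C_nonneg n k : 0 <= C n k.
Proof. apply Rdiv_le_0_compat; [apply pos_INR|apply Rmult_lt_0_compat; apply INR_fact_lt_0]. Qed.

Lemma C_div_pow2_nonneg K i : 0 <= C K i / 2 ^ K.
Proof. apply Rdiv_le_0_compat; [apply C_nonneg|apply pow_lt; lra]. Qed.

Lemma central_binomial_S s :
  C (2 * S s) (S s) / 2 ^ (2 * S s) = C (2 * s) s / 2 ^ (2 * s) * ((2 * INR s + 1) / (2 * INR s + 2)).
Proof.
  unfold C.
  replace (2 * S s - S s)%nat with (S s) by lia; replace (2 * s - s)%nat with s by lia.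
  replace (2 * S s)%nat with (S (S (2 * s))) by lia.
  rewrite !fact_simpl, !mult_INR, !S_INR, mult_INR; simpl INR; rewrite <- !tech_pow_Rmult.
  pose proof (INR_fact_lt_0 s); pose proof (INR_fact_lt_0 (2 * s)); pose proof (pos_INR s).
  pose proof (pow_lt 2 (2 * s) ltac:(lra)).
  field; repeat split; lra.
Qed.

Lemma central_binomial_sq_mul_le s : (C (2 * s) s / 2 ^ (2 * s)) ^ 2 * (2 * INR s + 1) <= 1.
Proof.
  induction s as [|s IH].
  - simpl; rewrite C_n_0; lra.
  - rewrite central_binomial_S, S_INR.
    set (u := C (2 * s) s / 2 ^ (2 * s)) in *.
    pose proof (pos_INR s).
    assert (Hshrink : (2 * INR s + 1) * (2 * INR s + 3) <= (2 * INR s + 2) ^ 2) by nra.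
    replace ((u * ((2 * INR s + 1) / (2 * INR s + 2))) ^ 2 * (2 * (INR s + 1) + 1))
      with (u ^ 2 * (2 * INR s + 1) * ((2 * INR s + 1) * (2 * INR s + 3) / (2 * INR s + 2) ^ 2))
      by (field; lra).
    assert (0 <= (2 * INR s + 1) * (2 * INR s + 3) / (2 * INR s + 2) ^ 2 <= 1).
    { split; [apply Rdiv_le_0_compat; nra|].
      apply Rmult_le_reg_r with ((2 * INR s + 2) ^ 2); [nra|].
      unfold Rdiv; rewrite Rmult_assoc, Rinv_l by nra; lra. }
    assert (0 <= u ^ 2 * (2 * INR s + 1)) by (apply Rmult_le_pos; [apply pow2_ge_0|lra]).
    nra.
Qed.

Lemma le_inv_sqrt x y : 0 <= x -> 0 < y -> x ^ 2 * y <= 1 -> x <= 1 / sqrt y.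
Proof.
  intros Hx Hy Hxy.
  pose proof (sqrt_lt_R0 y Hy).
  assert ((x * sqrt y) ^ 2 <= 1) by (rewrite Rpow_mult_distr, pow2_sqrt; lra).
  apply Rmult_le_reg_r with (sqrt y); [lra|].
  replace (1 / sqrt y * sqrt y) with 1 by (field; lra).
  assert (0 <= x * sqrt y) by nra.
  nra.
Qed.

Lemma central_binomial_odd s :
  C (S (2 * s)) s / 2 ^ S (2 * s) = C (2 * S s) (S s) / 2 ^ (2 * S s).
Proof.
  replace (2 * S s)%nat with (S (S (2 * s))) by lia.
  rewrite <- pascal by lia.
  rewrite (pascal_step1 (S (2 * s)) (S s)) by lia.
  replace (S (2 * s) - S s)%nat with s by lia.
  rewrite <- !tech_pow_Rmult; pose proof (pow_lt 2 (2 * s) ltac:(lra)); field; lra.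
Qed.

Lemma central_binomial_le K : C K (Nat.div2 K) / 2 ^ K <= 1 / sqrt (INR K + 1).
Proof.
  set (s := Nat.div2 K).
  pose proof (pos_INR s).
  destruct (Nat.Even_or_Odd K) as [HK|HK];
    [apply Nat.Even_double in HK|apply Nat.Odd_double in HK];
    fold s in HK; unfold Nat.double in HK; rewrite HK.
  - replace (s + s)%nat with (2 * s)%nat by lia.
    apply le_inv_sqrt; [apply C_div_pow2_nonneg|rewrite mult_INR; simpl; lra|].
    rewrite mult_INR; apply central_binomial_sq_mul_le.
  - replace (S (s + s))%nat with (S (2 * s)) by lia.
    rewrite central_binomial_odd.
    apply Rle_trans with (1 / sqrt (2 * INR (S s) + 1)).
    + apply le_inv_sqrt;
        [apply C_div_pow2_nonneg|rewrite S_INR; lra|apply central_binomial_sq_mul_le].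
    + rewrite !S_INR, mult_INR; simpl INR.
      unfold Rdiv; rewrite !Rmult_1_l.
      apply Rinv_le_contravar; [apply sqrt_lt_R0; lra|apply sqrt_le_1; lra].
Qed.

Lemma C_le_exp_mul_C_S K i : (2 * i + 1 <= K)%nat ->
  C K i <= exp (- (2 * (INR K - 2 * INR i - 1) / (INR K + 1))) * C K (S i).
Proof.
  intros HiK.
  rewrite (pascal_step3 K i) by lia; rewrite S_INR, minus_INR by lia.
  assert (Hi1 : 0 < INR i + 1) by (pose proof (pos_INR i); lra).
  assert (Hle : INR i + 1 <= INR K - INR i)
    by (rewrite <- S_INR, <- minus_INR by lia; apply le_INR; lia).
  pose proof (ratio_le_exp (INR K - INR i) (INR i + 1) Hi1 Hle) as Hratio.
  replace (INR K - INR i + (INR i + 1)) with (INR K + 1) in Hratio by ring.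
  replace (INR K - INR i - (INR i + 1)) with (INR K - 2 * INR i - 1) in Hratio by ring.
  set (E := exp _) in *.
  assert (1 <= E * ((INR K - INR i) / (INR i + 1))).
  { apply Rle_trans with ((INR i + 1) / (INR K - INR i) * ((INR K - INR i) / (INR i + 1)));
      [right; field; lra|].
    apply Rmult_le_compat_r; [apply Rdiv_le_0_compat; lra|exact Hratio]. }
  pose proof (C_nonneg K i); nra.
Qed.

Lemma C_le_exp_mul_C K i j : (i <= j)%nat -> (2 * j <= K)%nat ->
  C K i <= exp (- (((INR K - 2 * INR i) ^ 2 - (INR K - 2 * INR j) ^ 2) / (2 * (INR K + 1)))) * C K j.
Proof.
  intros Hij HjK; remember (j - i)%nat as d eqn:Hd; revert i Hij Hd.
  induction d as [|d IH]; intros i Hij Hd.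
  - replace j with i by lia.
    replace ((INR K - 2 * INR i) ^ 2 - (INR K - 2 * INR i) ^ 2) with 0 by ring.
    unfold Rdiv; rewrite Rmult_0_l, Ropp_0, exp_0; lra.
  - eapply Rle_trans; [apply C_le_exp_mul_C_S; lia|].
    eapply Rle_trans; [apply Rmult_le_compat_l; [left; apply exp_pos|apply (IH (S i)); lia]|].
    right; rewrite <- Rmult_assoc, <- exp_plus; f_equal; f_equal.
    pose proof (pos_INR K); rewrite S_INR; field; lra.
Qed.

Lemma C_le_C_S K i : (2 * i + 1 <= K)%nat -> C K i <= C K (S i).
Proof.
  intros HiK; eapply Rle_trans; [now apply C_le_exp_mul_C_S|].
  pose proof (C_nonneg K (S i)); pose proof (pos_INR K).
  assert (Hi : INR (2 * i + 1) <= INR K) by (apply le_INR, HiK).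
  rewrite plus_INR, mult_INR in Hi; simpl INR in Hi.
  set (y := 2 * (INR K - 2 * INR i - 1) / (INR K + 1)).
  assert (0 <= y) by (apply Rdiv_le_0_compat; lra).
  pose proof (exp_ineq1_le y); pose proof (exp_mul_exp_opp y); pose proof (exp_pos (- y)).
  assert (exp (- y) <= 1) by nra.
  nra.
Qed.

Lemma C_S_le_C K i : (K <= 2 * i + 1)%nat -> (i < K)%nat -> C K (S i) <= C K i.
Proof.
  intros HKi HiK.
  rewrite (pascal_step1 K i), (pascal_step1 K (S i)) by lia.
  replace (K - i)%nat with (S (K - S i)) by lia.
  apply C_le_C_S; lia.
Qed.

Lemma gaussian_exponent_le k D r : 1 <= k -> 0 <= D <= k ^ 2 -> 0 <= r <= 1 ->
  - ((D - r ^ 2) / (2 * (k + 1))) <= 1 + - D / (2 * k).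
Proof.
  intros Hk HD Hr.
  assert (k * r ^ 2 <= k)
    by (pattern k at 2; rewrite <- (Rmult_1_r k); apply Rmult_le_compat_l; nra).
  assert (1 + - D / (2 * k) - - ((D - r ^ 2) / (2 * (k + 1)))
          = (2 * k ^ 2 + 2 * k - D - k * r ^ 2) / (2 * k * (k + 1))) by (field; lra).
  assert (0 <= (2 * k ^ 2 + 2 * k - D - k * r ^ 2) / (2 * k * (k + 1)))
    by (apply Rdiv_le_0_compat; nra).
  lra.
Qed.

Lemma binomial_gaussian_bound_low K i : (1 <= K)%nat -> (i <= Nat.div2 K)%nat ->
  C K i / 2 ^ K <= exp 1 / sqrt (INR K) * exp (- ((INR K - 2 * INR i) ^ 2) / (2 * INR K)).
Proof.
  intros HK Hi.
  set (m := Nat.div2 K) in *.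
  assert (Hm : (2 * m <= K <= 2 * m + 1)%nat)
    by (pose proof (Nat.div2_odd K); destruct (Nat.odd K); simpl in *; lia).
  assert (HK1 : 1 <= INR K) by (apply (le_INR 1); lia).
  assert (HiK : 0 <= INR i <= INR K) by (split; [apply pos_INR|apply le_INR; lia]).
  assert (Hr : 0 <= INR K - 2 * INR m <= 1).
  { pose proof (le_INR _ _ (proj1 Hm)); pose proof (le_INR _ _ (proj2 Hm)).
    rewrite mult_INR in *; rewrite plus_INR, mult_INR in *; simpl INR in *; lra. }
  set (D := (INR K - 2 * INR i) ^ 2).
  set (E := (D - (INR K - 2 * INR m) ^ 2) / (2 * (INR K + 1))).
  assert (Hexp : - E <= 1 + - D / (2 * INR K))
    by (apply gaussian_exponent_le; [lra|unfold D; split; [apply pow2_ge_0|nra]|lra]).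
  pose proof (pow_lt 2 K ltac:(lra)).
  apply Rle_trans with (exp (- E) * (C K m / 2 ^ K)).
  { replace (exp (- E) * (C K m / 2 ^ K)) with (exp (- E) * C K m / 2 ^ K) by (field; lra).
    unfold Rdiv; apply Rmult_le_compat_r; [left; apply Rinv_0_lt_compat; lra|].
    apply C_le_exp_mul_C; lia. }
  apply Rle_trans with (exp (1 + - D / (2 * INR K)) * (1 / sqrt (INR K))).
  - apply Rmult_le_compat; [left; apply exp_pos|apply C_div_pow2_nonneg| |].
    + destruct Hexp as [Hlt|Heq]; [left; apply exp_increasing, Hlt|rewrite Heq; lra].
    + eapply Rle_trans; [apply central_binomial_le|].
      unfold Rdiv; rewrite !Rmult_1_l.
      apply Rinv_le_contravar; [apply sqrt_lt_R0; lra|apply sqrt_le_1; lra].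
  - right; rewrite exp_plus; unfold D; field.
    pose proof (sqrt_lt_R0 (INR K)); lra.
Qed.

Lemma binomial_gaussian_bound K i : (1 <= K)%nat -> (i <= K)%nat ->
  C K i / 2 ^ K <= exp 1 / sqrt (INR K) * exp (- ((INR K - 2 * INR i) ^ 2) / (2 * INR K)).
Proof.
  intros HK Hi.
  destruct (Compare_dec.le_lt_dec i (Nat.div2 K)) as [Hlow|Hhigh]; [now apply binomial_gaussian_bound_low|].
  rewrite pascal_step1 by lia.
  replace ((INR K - 2 * INR i) ^ 2) with ((INR K - 2 * INR (K - i)) ^ 2)
    by (rewrite minus_INR by lia; ring).
  apply binomial_gaussian_bound_low; [lia|].
  pose proof (Nat.div2_odd K); destruct (Nat.odd K); simpl in *; lia.
Qed.

Lemma mix_le_half_sum p q X Y x y z k : 0 <= p -> 0 <= q -> p + q = 1 -> (p - q) * (x - y) <= 0 ->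
  x + y = z -> 0 < k -> X <= x / k -> Y <= y / k -> p * X + q * Y <= z / (2 * k).
Proof.
  intros Hp Hq Hpq Hsign <- Hk HX HY.
  apply Rle_trans with ((p * x + q * y) / k).
  - replace ((p * x + q * y) / k) with (p * (x / k) + q * (y / k)) by (field; lra).
    apply Rplus_le_compat; apply Rmult_le_compat_l; assumption.
  - replace ((x + y) / (2 * k)) with ((p * x + q * y - (p - q) * (x - y) / 2) / k)
      by (replace q with (1 - p) by lra; field; lra).
    unfold Rdiv; apply Rmult_le_compat_r; [left; apply Rinv_0_lt_compat, Hk|lra].
Qed.

Lemma npow_pos alpha i : (1 <= i)%nat -> 0 < npow alpha i.
Proof. intros Hi; destruct i; [lia|apply exp_pos]. Qed.

Lemma npow_le alpha i j : 0 <= alpha -> (1 <= i)%nat -> (i <= j)%nat -> npow alpha i <= npow alpha j.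
Proof.
  intros Halpha Hi Hij; destruct i; [lia|]; destruct j; [lia|].
  apply Rle_Rpower_l; [exact Halpha|split; [apply lt_0_INR; lia|apply le_INR, Hij]].
Qed.

Section Chain.

Variable alpha : R.

Lemma pstepR_nonneg a b : (1 <= a)%nat -> (1 <= b)%nat -> 0 <= pstepR alpha a b.
Proof.
  intros Ha Hb; pose proof (npow_pos alpha a Ha); pose proof (npow_pos alpha b Hb).
  apply Rdiv_le_0_compat; lra.
Qed.

Lemma pstepU_nonneg a b : (1 <= a)%nat -> (1 <= b)%nat -> 0 <= pstepU alpha a b.
Proof.
  intros Ha Hb; pose proof (npow_pos alpha a Ha); pose proof (npow_pos alpha b Hb).
  apply Rdiv_le_0_compat; lra.
Qed.

Lemma pstepR_add_pstepU a b : (1 <= a)%nat -> (1 <= b)%nat -> pstepR alpha a b + pstepU alpha a b = 1.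
Proof.
  intros Ha Hb; pose proof (npow_pos alpha a Ha); pose proof (npow_pos alpha b Hb).
  unfold pstepR, pstepU; field; lra.
Qed.

Lemma at_after_past_l K : forall a b c d, (c < a)%nat -> at_after alpha K a b c d = 0.
Proof.
  induction K as [|K IH]; intros a b c d Hca; simpl.
  - destruct (Nat.eqb_spec a c); [lia|reflexivity].
  - rewrite !IH by lia; ring.
Qed.

Lemma at_after_past_r K : forall a b c d, (d < b)%nat -> at_after alpha K a b c d = 0.
Proof.
  induction K as [|K IH]; intros a b c d Hdb; simpl.
  - destruct (Nat.eqb_spec b d); [lia|now rewrite Bool.andb_false_r].
  - rewrite !IH by lia; ring.
Qed.

Hypothesis alpha_nonneg : 0 <= alpha.

Lemma pstepU_le_pstepR a b : (1 <= b)%nat -> (b <= a)%nat -> pstepU alpha a b <= pstepR alpha a b.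
Proof.
  intros Hb Hba; pose proof (npow_pos alpha a ltac:(lia)); pose proof (npow_pos alpha b Hb).
  unfold pstepR, pstepU, Rdiv; apply Rmult_le_compat_r; [left; apply Rinv_0_lt_compat; lra|].
  now apply npow_le.
Qed.

Lemma pstepR_le_pstepU a b : (1 <= a)%nat -> (a <= b)%nat -> pstepR alpha a b <= pstepU alpha a b.
Proof.
  intros Ha Hab; pose proof (npow_pos alpha a Ha); pose proof (npow_pos alpha b ltac:(lia)).
  unfold pstepR, pstepU, Rdiv; apply Rmult_le_compat_r; [left; apply Rinv_0_lt_compat; lra|].
  now apply npow_le.
Qed.

Lemma at_after_le_binomial n K : forall a b, (1 <= a)%nat -> (1 <= b)%nat -> (a + b + K = 2 * n)%nat ->
  at_after alpha K a b n n <= C K (n - a) / 2 ^ K.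
Proof.
  induction K as [|K IH]; intros a b Ha Hb HK.
  all: destruct (Compare_dec.le_lt_dec a n) as [Han|Hna];
    [|rewrite at_after_past_l by lia; apply C_div_pow2_nonneg].
  all: destruct (Compare_dec.le_lt_dec b n) as [Hbn|Hnb];
    [|rewrite at_after_past_r by lia; apply C_div_pow2_nonneg].
  - replace a with n by lia; replace b with n by lia.
    simpl; rewrite Nat.eqb_refl, Nat.sub_diag, C_n_0; simpl; lra.
  - pose proof (pstepR_nonneg a b Ha Hb); pose proof (pstepU_nonneg a b Ha Hb).
    pose proof (pstepR_add_pstepU a b Ha Hb).
    pose proof (pow_lt 2 K ltac:(lra)).
    simpl at_after; simpl pow.
    destruct (Nat.eq_dec a n) as [->|Hna]; [|destruct (Nat.eq_dec b n) as [->|Hnb]].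
    + rewrite (at_after_past_l K (S n)) by lia; rewrite Nat.sub_diag, C_n_0.
      specialize (IH n (S b) Ha ltac:(lia) ltac:(lia)); rewrite Nat.sub_diag, C_n_0 in IH.
      pose proof (pstepU_le_pstepR n b Hb Hbn).
      apply (mix_le_half_sum _ _ _ _ 0 1); auto; [nra|lra|unfold Rdiv; lra].
    + rewrite (at_after_past_r K a (S n)) by lia.
      specialize (IH (S a) n ltac:(lia) Hb ltac:(lia)).
      replace (n - S a)%nat with K in IH by lia; replace (n - a)%nat with (S K) by lia.
      rewrite C_n_n in *.
      pose proof (pstepR_le_pstepU a n Ha Han).
      apply (mix_le_half_sum _ _ _ _ 1 0); auto; [nra|lra|unfold Rdiv; lra].
    + pose proof (IH (S a) b ltac:(lia) Hb ltac:(lia)) as IHR.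
      pose proof (IH a (S b) Ha ltac:(lia) ltac:(lia)) as IHU.
      replace (n - a)%nat with (S (n - S a)) in * by lia.
      apply mix_le_half_sum with (x := C K (n - S a)) (y := C K (S (n - S a))); auto;
        [|apply pascal; lia].
      destruct (Compare_dec.le_lt_dec b a) as [Hba|Hab].
      * pose proof (pstepU_le_pstepR a b Hb Hba); pose proof (C_le_C_S K (n - S a) ltac:(lia)); nra.
      * pose proof (pstepR_le_pstepU a b Ha ltac:(lia)); pose proof (C_S_le_C K (n - S a) ltac:(lia) ltac:(lia)); nra.
Qed.

End Chain.

Lemma bingo_gaussian_bound alpha A L n a b : 0 <= alpha ->
  INR a = A + L -> INR b = A - L -> A < INR n -> Rabs L <= A - 1 ->
  bingo alpha a b n n <= exp 1 / sqrt (INR n - A) * exp (- (L ^ 2) / (INR n - A)).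
Proof.
  intros Halpha Ha Hb HAn HL; apply Rabs_le_between in HL.
  assert (Ha1 : (1 <= a)%nat) by (apply INR_le; simpl; lra).
  assert (Hb1 : (1 <= b)%nat) by (apply INR_le; simpl; lra).
  assert (Hab : (a + b < n + n)%nat) by (apply INR_lt; rewrite !plus_INR; lra).
  unfold bingo; replace (Nat.leb (a + b) (n + n)) with true by (symmetry; apply Nat.leb_le; lia).
  assert (Hrhs : 0 <= exp 1 / sqrt (INR n - A) * exp (- (L ^ 2) / (INR n - A))).
  { apply Rmult_le_pos; [|left; apply exp_pos].
    apply Rdiv_le_0_compat; [left; apply exp_pos|apply sqrt_lt_R0; lra]. }
  destruct (Compare_dec.le_lt_dec a n) as [Han|Hna]; [|now rewrite at_after_past_l by lia].
  destruct (Compare_dec.le_lt_dec b n) as [Hbn|Hnb]; [|now rewrite at_after_past_r by lia].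
  set (K := (n + n - (a + b))%nat).
  assert (EK : INR K = 2 * (INR n - A)) by (unfold K; rewrite minus_INR, !plus_INR by lia; lra).
  eapply Rle_trans; [apply at_after_le_binomial; [exact Halpha|exact Ha1|exact Hb1|unfold K; lia]|].
  eapply Rle_trans; [apply binomial_gaussian_bound; unfold K; lia|].
  rewrite EK, minus_INR, Ha by lia.
  replace (- ((2 * (INR n - A) - 2 * (INR n - (A + L))) ^ 2) / (2 * (2 * (INR n - A))))
    with (- (L ^ 2) / (INR n - A)) by (field; lra).
  apply Rmult_le_compat_r; [left; apply exp_pos|].
  unfold Rdiv; apply Rmult_le_compat_l; [left; apply exp_pos|].
  apply Rinv_le_contravar; [apply sqrt_lt_R0; lra|apply sqrt_le_1; lra].
Qed.

Theorem mainTheorem11 :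
  exists C C' : R,
  forall (alpha : R), 1 < alpha ->
  forall (A L : R) (n a b : nat),
    INR a = A + L -> INR b = A - L ->
    A < INR n -> Rabs L <= A - 1 ->
    bingo alpha a b n n <= C / sqrt (INR n - A) * exp (- (L ^ 2) / (INR n - A)) /\
    (L <> 0 ->
     bingo alpha a b n n <= C' / Rabs L * exp (- (L ^ 2) / (2 * (INR n - A)))).
Proof.
  exists (exp 1), (exp 1).
  intros alpha Halpha A L n a b Ha Hb HAn HL.
  pose proof (bingo_gaussian_bound alpha A L n a b ltac:(lra) Ha Hb HAn HL) as Hgauss.
  split; [exact Hgauss|].
  intros HL0; eapply Rle_trans; [exact Hgauss|].
  apply gaussian_le_inv_abs; [left; apply exp_pos|lra|exact HL0].
Qed.
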